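(* There is an absolute constant $c>0$ such that every connected finite simple undirected graph on $d\ge2$ vertices in which every vertex has degree $1$ or degree at least $3$ has a spanning tree with at least $c\,d$ leaves.
   Context: A leaf of a tree is a vertex of degree 1. *)

From mathcomp Require Import all_boot all_order all_algebra.
Set Implicit Arguments. Unset Strict Implicit. Unset Printing Implicit Defensive.
Import Order.TTheory GRing.Theory Num.Theory.

Definition simple_graph (T : finType) (e : rel T) : Prop :=
  symmetric e /\ irreflexive e.

Definition degree (T : finType) (e : rel T) (x : T) : nat := #|[set y | e x y]|.

Definition connected_graph (T : finType) (e : rel T) : Prop :=
  forall x y : T, connect e x y.

(* a cycle: a closed walk x, s_1, ..., s_k, x with k >= 2 (at least 3
   vertices) all of whose vertices are distinct *)
Definition has_cycle (T : finType) (e : rel T) : Prop :=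
  exists (x : T) (s : seq T),
    [/\ 2 <= size s, uniq (x :: s), path e x s & e (last x s) x].

Definition acyclic (T : finType) (e : rel T) : Prop := ~ has_cycle e.

Definition spanning_tree (T : finType) (e t : rel T) : Prop :=
  [/\ subrel t e, simple_graph t, connected_graph t & acyclic t].

Definition leaves (T : finType) (e : rel T) : {set T} :=
  [set x | degree e x == 1%N].

From mathcomp Require Import all_boot all_order all_algebra.
From mathcomp Require Import zify lra.
Set Implicit Arguments. Unset Strict Implicit. Unset Printing Implicit Defensive.
Import Order.TTheory GRing.Theory Num.Theory.

(* The tree is grown from a root r, in the style of Kleitman and West.  A
   state records the covered vertices A, the expanded vertices P (whose whole
   neighbourhood is covered) and a parent map with a decreasing height; an
   unexpanded covered vertex is dead when it has no uncovered neighbour.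
   Expanding a vertex attaches all its uncovered neighbours to it.  We keep
   the potential inequality 3|P| + 1 <= 2|A| + |dead|: each step expands one
   vertex with at least two new neighbours, or two vertices in a row whose
   second has at least two, or one vertex with a single new neighbour while
   creating a new dead vertex (this uses the degree condition).  Once A is
   everything, the parent map is a spanning tree (first section) whose leaves
   include the n - |P| unexpanded vertices, and dead vertices are among them,
   so 3|P| + 1 <= 3n - |P|, that is, more than n/4 leaves. *)

Section ParentTree.
Variables (T : finType) (e : rel T) (r : T) (p : T -> T) (h : T -> nat).
Hypothesis e_sym : symmetric e.
Hypothesis p_root : p r = r.
Hypothesis p_edge : forall y, y != r -> e y (p y).
Hypothesis p_lower : forall y, y != r -> h (p y) < h y.

Definition parent_rel : rel T := fun x y => (x != y) && ((p x == y) || (p y == x)).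

Lemma parent_neq y : y != r -> p y != y.
Proof. by move=> yr; apply: contraTneq (p_lower yr) => ->; rewrite ltnn. Qed.

Lemma parent_rel_sym : symmetric parent_rel.
Proof. by move=> x y; rewrite /parent_rel eq_sym orbC. Qed.

Lemma parent_rel_irr : irreflexive parent_rel.
Proof. by move=> x; rewrite /parent_rel eqxx. Qed.

(* a tree edge goes from a non-root vertex to its parent, in one direction
   or the other (the root is its own parent, which gives no edge) *)
Lemma parent_relP x y :
  parent_rel x y -> (x != r /\ p x = y) \/ (y != r /\ p y = x).
Proof.
case/andP=> xy /orP[/eqP pxy | /eqP pyx].
- left; split=> //; apply: contraNneq xy => xr.
  by rewrite -pxy xr p_root.
- right; split=> //; apply: contraNneq xy => yr.
  by rewrite -pyx yr p_root.
Qed.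

Lemma parent_rel_sub : subrel parent_rel e.
Proof.
move=> x y /parent_relP[[xr <-] | [yr <-]]; first exact: p_edge.
by rewrite e_sym; exact: p_edge.
Qed.

Lemma connect_to_root x : connect parent_rel x r.
Proof.
have [n] := ubnP (h x); elim: n x => // n IH x /ltnSE hx.
have [->|xr] := eqVneq x r; first exact: connect0.
have txp : parent_rel x (p x) by rewrite /parent_rel eq_sym parent_neq ?eqxx.
exact: connect_trans (connect1 txp) (IH _ (leq_trans (p_lower xr) hx)).
Qed.

(* on a cycle, the highest vertex v is adjacent to two distinct cycle
   vertices; neither is a child of v (it would be higher), so both are p v *)
Lemma parent_rel_acyclic : acyclic parent_rel.
Proof.
move=> [x [s [size_s uniq_s path_s last_s]]].
have cyc : cycle parent_rel (x :: s) by rewrite /= rcons_path path_s last_s.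
have [v v_in v_max] := @arg_maxnP _ x (mem (x :: s)) h (mem_head x s).
have to_parent y : y \in x :: s -> parent_rel v y -> p v = y.
  move=> y_in /parent_relP[[_ //] | [yr pyv]].
  by have := v_max y y_in; rewrite /= leqNgt -pyv p_lower.
case: (rot_to v_in) => i s' rot_s.
have cyc' : cycle parent_rel (v :: s') by rewrite -rot_s rot_cycle.
have uniq' : uniq (v :: s') by rewrite -rot_s rot_uniq.
have in_s y : y \in v :: s' -> y \in x :: s by rewrite -rot_s mem_rot.
have size' : size s' = size s.
  by move/(congr1 size): rot_s; rewrite size_rot /= => -[].
case: s' rot_s size' cyc' uniq' in_s => [|a [|c s3]] _ /= size' cyc' uniq' in_s;
  rewrite -?size' // in size_s.
move: cyc'; rewrite rcons_path /= => /and3P[tva _ /andP[_ tlv]].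
have pva : p v = a by apply: to_parent => //; apply: in_s; rewrite !inE eqxx orbT.
have pvl : p v = last c s3.
  apply: to_parent; last by rewrite parent_rel_sym.
  by apply: in_s; rewrite (in_cons v) (in_cons a) mem_last !orbT.
by case/and4P: uniq' => _ + _ _; rewrite -pva pvl mem_last.
Qed.

Lemma childless_leaf x :
  x != r -> (forall y, y != r -> p y != x) -> x \in leaves parent_rel.
Proof.
move=> xr childless; rewrite inE /degree.
suff -> : [set y | parent_rel x y] = [set p x] by rewrite cards1.
apply/setP=> y; rewrite !inE; apply/idP/eqP.
- case/parent_relP=> [[_ ->] // | [yr pyx]].
  by have := childless y yr; rewrite pyx eqxx.
- by move=> ->; rewrite /parent_rel eq_sym parent_neq ?eqxx.
Qed.

Lemma parent_rel_spanning : spanning_tree e parent_rel.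
Proof.
split; [exact: parent_rel_sub | | | exact: parent_rel_acyclic].
  by split; [exact: parent_rel_sym | exact: parent_rel_irr].
move=> x y; apply: connect_trans (connect_to_root x) _.
by rewrite (sym_connect_sym parent_rel_sym); exact: connect_to_root.
Qed.

End ParentTree.

Section Growth.
Variables (T : finType) (e : rel T) (r : T).
Hypothesis e_sym : symmetric e.
Hypothesis e_irr : irreflexive e.

Definition nbhd (x : T) : {set T} := [set y | e x y].

Record state := State {
  covered : {set T};
  inner : {set T};
  parent : T -> T;
  height : T -> nat }.

Definition tree_inv (s : state) : Prop :=
  [/\ r \in covered s, inner s \subset covered s, parent s r = r,
      (forall y, y \in covered s -> y != r ->
         [/\ parent s y \in inner s, e y (parent s y)
           & height s (parent s y) < height s y])
    & (forall x, x \in inner s -> nbhd x \subset covered s)].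

Definition outside (s : state) (x : T) : {set T} := nbhd x :\: covered s.

Definition dead (s : state) : {set T} :=
  [set x in covered s :\: inner s | nbhd x \subset covered s].

Definition weight (s : state) : nat := 2 * #|covered s| + #|dead s|.

Definition good (s : state) : Prop :=
  [/\ tree_inv s, r \in inner s & 3 * #|inner s| + 1 <= weight s].

Definition expand (s : state) (a : T) : state :=
  State (covered s :|: outside s a) (a |: inner s)
    (fun z => if z \in outside s a then a else parent s z)
    (fun z => if z \in outside s a then (height s a).+1 else height s z).

Lemma covered_notin_outside s a z : z \in covered s -> z \notin outside s a.
Proof. by move=> zA; rewrite inE zA. Qed.

Lemma expand_inv s a : tree_inv s -> a \in covered s -> tree_inv (expand s a).
Proof.
case=> rA PA pr up nbP aA; split=> /=.
- by rewrite inE rA.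
- apply/subsetP=> z /setU1P[-> | /(subsetP PA) zA].
  + by rewrite inE aA.
  + by rewrite inE zA.
- by rewrite (negbTE (covered_notin_outside a rA)).
- move=> y; rewrite inE => /orP[yA | y_out] yr.
  + have [pP eyp lower] := up y yA yr.
    rewrite (negbTE (covered_notin_outside a yA)).
    by rewrite (negbTE (covered_notin_outside a (subsetP PA _ pP))) setU1r.
  + rewrite y_out (negbTE (covered_notin_outside a aA)) setU11 ltnSn.
    by move: y_out; rewrite !inE e_sym => /andP[].
- move=> x /setU1P[-> | /nbP nb_x].
  + apply/subsetP=> z z_nb; rewrite in_setU in_setD z_nb andbT.
    exact: orbN.
  + exact: subset_trans nb_x (subsetUl _ _).
Qed.

Lemma card_expand_covered s a :
  #|covered (expand s a)| = #|covered s| + #|outside s a|.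
Proof.
rewrite cardsU; suff -> : covered s :&: outside s a = set0.
  by rewrite cards0 subn0.
by apply/setP=> z; rewrite !inE; case: (z \in covered s); rewrite ?andbF.
Qed.

Lemma card_expand_inner s a :
  a \notin inner s -> #|inner (expand s a)| = #|inner s|.+1.
Proof. by move=> aP; rewrite cardsU1 aP. Qed.

Lemma dead_expand s a :
  a \in covered s -> outside s a != set0 -> dead s \subset dead (expand s a).
Proof.
move=> aA /set0Pn[z]; rewrite inE => /andP[zA z_nb].
apply/subsetP=> x; rewrite !inE => /andP[/andP[xP xA] nb_x].
have xa : x != a by apply: contraNneq zA => xa; apply: (subsetP nb_x); rewrite xa.
rewrite negb_or xa xP xA /=.
exact: subset_trans nb_x (subsetUl _ _).
Qed.

Lemma weight_expand s a : a \in covered s -> outside s a != set0 ->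
  weight s + 2 * #|outside s a| <= weight (expand s a).
Proof.
move=> aA out_a; rewrite /weight card_expand_covered.
have := subset_leq_card (dead_expand aA out_a); lia.
Qed.

Lemma grow_branching s x :
  good s -> x \in covered s -> x \notin inner s -> 1 < #|outside s x| ->
  good (expand s x) /\ #|covered s| < #|covered (expand s x)|.
Proof.
case=> inv rP pot xA xP big.
have out_x : outside s x != set0 by rewrite -card_gt0 ltnW.
have W := weight_expand xA out_x.
rewrite card_expand_covered; split; last by lia.
split; [exact: expand_inv | exact: setU1r |].
by rewrite card_expand_inner //; lia.
Qed.

Lemma grow_two_levels s a b :
  good s -> a \in covered s -> a \notin inner s -> outside s a = [set b] ->
  1 < #|outside (expand s a) b| ->
  good (expand (expand s a) b) /\
  #|covered s| < #|covered (expand (expand s a) b)|.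
Proof.
case=> inv rP pot aA aP out_a big; have [_ PA _ _ _] := inv.
have b_out : b \in outside s a by rewrite out_a set11.
have bA : b \notin covered s by move: b_out; rewrite inE => /andP[].
have bA1 : b \in covered (expand s a) by rewrite inE b_out orbT.
have bP1 : b \notin inner (expand s a).
  rewrite !inE negb_or; apply/andP; split.
    by apply: contraNneq bA => ->.
  by apply: contra bA; exact: (subsetP PA).
have out_a0 : outside s a != set0 by rewrite out_a -card_gt0 cards1.
have out_b0 : outside (expand s a) b != set0 by rewrite -card_gt0 ltnW.
have W1 := weight_expand aA out_a0.
have W2 := weight_expand bA1 out_b0.
have cov2 : #|covered (expand (expand s a) b)| =
    #|covered s| + 1 + #|outside (expand s a) b|.
  by rewrite (card_expand_covered (expand s a)) card_expand_covered out_a cards1.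
have inn2 : #|inner (expand (expand s a) b)| = #|inner s|.+2.
  by rewrite (card_expand_inner bP1) (card_expand_inner aP).
rewrite out_a cards1 in W1; rewrite cov2 addn1; split; last exact: leq_addr.
split; [exact: expand_inv (expand_inv inv aA) bA1 | by rewrite !setU1r |].
by rewrite inn2; move: pot W1 W2 big; clear; lia.
Qed.

Lemma grow_dead s a b :
  good s -> a \in covered s -> a \notin inner s -> outside s a = [set b] ->
  (exists2 d, d \in dead (expand s a) & d \notin dead s) ->
  good (expand s a) /\ #|covered s| < #|covered (expand s a)|.
Proof.
case=> inv rP pot aA aP out_a [d d_dead1 d_dead].
have out_a0 : outside s a != set0 by rewrite out_a -card_gt0 cards1.
have more_dead : #|dead s| < #|dead (expand s a)|.
  by apply/proper_card/properP; split; [exact: dead_expand | exists d].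
rewrite card_expand_covered out_a cards1; split; last by lia.
split; [exact: expand_inv | exact: setU1r |].
move: pot; rewrite card_expand_inner // /weight card_expand_covered out_a cards1.
lia.
Qed.

Lemma fresh_vertex_dies s a b :
  inner s \subset covered s -> b \in outside s a ->
  outside (expand s a) b = set0 ->
  b \in dead (expand s a) /\ b \notin dead s.
Proof.
move=> PA b_out no_out; have bA : b \notin covered s.
  by move: b_out; rewrite inE => /andP[].
split; last by rewrite !inE (negbTE bA) andbF.
have ba : b != a by apply: contraTneq b_out => ->; rewrite !inE e_irr andbF.
rewrite inE in_setD in_setU1 negb_or ba (contra (subsetP PA b) bA) in_setU b_out orbT /=.
apply/subsetP=> u u_nb; apply: contraT => uA1.
by have := in_set0 u; rewrite -no_out in_setD uA1 u_nb.
Qed.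

Lemma old_vertex_dies s a b w :
  w \in covered s -> w \notin inner s -> w != a -> #|outside s w| <= 1 ->
  b \in outside s a -> e w b ->
  w \in dead (expand s a) /\ w \notin dead s.
Proof.
move=> wA wP wa small_w b_out ewb.
have bA : b \notin covered s by move: b_out; rewrite inE => /andP[].
have b_out_w : b \in outside s w by rewrite in_setD bA inE.
split.
- rewrite inE in_setD in_setU1 negb_or wa wP in_setU wA /=.
  apply/subsetP=> u u_nb; rewrite in_setU; case uA: (u \in covered s) => //=.
  suff -> : u = b by [].
  by apply: (card_le1_eqP small_w) => //; rewrite in_setD uA.
- rewrite inE; apply/negP=> /andP[_ /subsetP/(_ b)].
  by rewrite inE ewb => /(_ isT); apply/negP.
Qed.

Hypothesis e_conn : connected_graph e.

Lemma frontier_edge (A : {set T}) : r \in A -> A != setT ->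
  exists a b, [/\ a \in A, b \notin A & e a b].
Proof.
move=> rA; rewrite -properT => /properP[_ [z _ zA]].
suff /existsP[a /existsP[b /and3P[aA bA eab]]] :
    [exists a, exists b, [&& a \in A, b \notin A & e a b]] by exists a, b.
apply: contraNT zA => /existsPn no_exit.
have stays x y : e x y -> x \in A -> y \in A.
  move=> exy xA; apply: contraT => yA.
  by have /existsPn/(_ y) := no_exit x; rewrite xA yA exy.
rewrite -(closed_connect _ (e_conn r z)) // => x y exy.
by apply/idP/idP; apply: stays; rewrite // e_sym.
Qed.

Hypothesis degree_1_or_3 :
  forall x : T, degree e x = 1%N \/ (3 <= degree e x)%N.

Lemma second_inside_neighbour (C : {set T}) b a z :
  a \in nbhd b -> a \in C -> z \in nbhd b :\: C -> #|nbhd b :\: C| <= 1 ->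
  exists2 w, w \in nbhd b :&: C & w != a.
Proof.
move=> nb_a aC z_out small_b.
have deg_b : 3 <= #|nbhd b|.
  have [deg1|//] := degree_1_or_3 b.
  have z_nb : z \in nbhd b by move: z_out; rewrite in_setD => /andP[].
  have za : z != a by apply: contraTneq z_out => ->; rewrite in_setD aC.
  have /card_le1_eqP one_nb : #|nbhd b| <= 1 by rewrite -deg1.
  by rewrite (one_nb z a z_nb nb_a) eqxx in za.
apply/exists_inP; apply: contraLR deg_b => /exists_inPn others; rewrite -leqNgt.
have sub : nbhd b \subset a |: (nbhd b :\: C).
  apply/subsetP=> u u_nb; rewrite in_setU1 in_setD u_nb andbT orbC.
  by case uC: (u \in C) => //=; apply/negPn/others; rewrite in_setI u_nb uC.
apply: leq_trans (subset_leq_card sub) _.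
by rewrite cardsU1 (leq_add (leq_b1 _) small_b).
Qed.

(* When no unexpanded vertex has two outside neighbours, attaching the
   single outside neighbour b of a creates a dead vertex, provided b then
   has at most one outside neighbour: either b itself dies, or b has a
   second covered neighbour w, whose only outside neighbour was b. *)
Lemma new_dead_vertex s a b : tree_inv s ->
  (forall x, x \in covered s -> x \notin inner s -> #|outside s x| <= 1) ->
  a \in covered s -> outside s a = [set b] ->
  #|outside (expand s a) b| <= 1 ->
  exists2 d, d \in dead (expand s a) & d \notin dead s.
Proof.
move=> [_ PA _ _ nbP] small aA out_a small_b.
set s1 := expand s a.
have b_out : b \in outside s a by rewrite out_a set11.
have bA : b \notin covered s by move: b_out; rewrite inE => /andP[].
have [no_out | [z z_out]] := set_0Vmem (outside s1 b).
  by have [] := fresh_vertex_dies PA b_out no_out; exists b.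
have aA1 : a \in covered s1 by rewrite in_setU aA.
have nb_a : a \in nbhd b by rewrite inE e_sym; move: b_out; rewrite !inE => /andP[].
have [w] := second_inside_neighbour nb_a aA1 z_out small_b.
rewrite inE => /andP[w_nb wA1] wa.
have ebw : e b w by rewrite inE in w_nb.
have wA : w \in covered s.
  move: wA1; rewrite in_setU out_a in_set1 => /orP[// | /eqP wb].
  by rewrite wb e_irr in ebw.
have wP : w \notin inner s.
  by apply: contra bA => /nbP/subsetP; apply; rewrite inE e_sym.
have [] := old_vertex_dies wA wP wa (small w wA wP) b_out; first by rewrite e_sym.
by exists w.
Qed.

Lemma grow s : good s -> covered s != setT ->
  exists s', good s' /\ #|covered s| < #|covered s'|.
Proof.
move=> gs not_all; have [inv rP _] := gs; have [rA _ _ _ nbP] := inv.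
have [a [b [aA bA eab]]] := frontier_edge rA not_all.
have aP : a \notin inner s by apply: contra bA => /nbP/subsetP; apply; rewrite inE.
have b_out : b \in outside s a by rewrite in_setD bA inE.
have [|/exists_inPn small] :=
  boolP [exists x in covered s :\: inner s, 1 < #|outside s x|].
  case/exists_inP=> x; rewrite in_setD => /andP[xP xA] big.
  by exists (expand s x); exact: grow_branching.
have {}small x : x \in covered s -> x \notin inner s -> #|outside s x| <= 1.
  by move=> xA xP; rewrite leqNgt small // in_setD xP xA.
have out_a : outside s a = [set b].
  by apply/eqP; rewrite eq_sym eqEcard sub1set b_out cards1 small.
have [big_b | small_b] := ltnP 1 #|outside (expand s a) b|.
  by exists (expand (expand s a) b); exact: grow_two_levels.
exists (expand s a); apply: (grow_dead gs aA aP out_a).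
exact: new_dead_vertex inv small aA out_a small_b.
Qed.

Lemma grow_to_all s : good s -> exists s', good s' /\ covered s' = setT.
Proof.
have [n] := ubnP (#|T| - #|covered s|); elim: n s => // n IH s bound gs.
have [all | not_all] := eqVneq (covered s) setT; first by exists s.
have [s' [gs' bigger]] := grow gs not_all.
by apply: IH gs'; have := max_card (covered s'); lia.
Qed.

Definition root_state : state := State [set r] set0 (fun=> r) (fun=> 0).

Lemma good_start : good (expand root_state r).
Proof.
have rA : r \in covered root_state by exact: set11.
have root_inv : tree_inv root_state.
  by split=> //= [|y /set1P-> /eqP|x]; rewrite ?sub0set ?inE.
have out_r : outside root_state r != set0.
  have [z z_nb] : exists z, z \in nbhd r.
    apply/card_gt0P; rewrite -[#|_|]/(degree e r).
    by case: (degree_1_or_3 r) => [->|/ltnW/ltnW].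
  apply/set0Pn; exists z; rewrite in_setD z_nb andbT inE.
  by apply: contraTneq z_nb => ->; rewrite inE e_irr.
have W := weight_expand rA out_r.
split; [exact: expand_inv | exact: setU11 |].
move: W (out_r); rewrite -card_gt0 card_expand_inner ?inE // cards0 /weight cards1.
lia.
Qed.

Lemma good_complete_tree s : good s -> covered s = setT ->
  spanning_tree e (parent_rel (parent s)) /\
  #|T| < 4 * #|leaves (parent_rel (parent s))|.
Proof.
case=> [[_ _ p_root up _] rP pot] all.
have up' y : y != r ->
    [/\ parent s y \in inner s, e y (parent s y)
      & height s (parent s y) < height s y].
  by apply: up; rewrite all inE.
have p_edge y (yr : y != r) : e y (parent s y) by case: (up' y yr).
have p_lower y (yr : y != r) : height s (parent s y) < height s y.
  by case: (up' y yr).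
split; first exact: parent_rel_spanning e_sym p_root p_edge p_lower.
have leaves_big : ~: inner s \subset leaves (parent_rel (parent s)).
  apply/subsetP=> x; rewrite inE => xP.
  apply: (childless_leaf p_root p_lower); first by apply: contraNneq xP => ->.
  by move=> y yr; apply: contraNneq xP => <-; case: (up' y yr).
have dead_small : dead s \subset ~: inner s.
  by apply/subsetP=> x; rewrite !inE => /andP[/andP[]].
have := cardsC (inner s); have := subset_leq_card leaves_big.
have := subset_leq_card dead_small.
move: pot; rewrite /weight all cardsT; lia.
Qed.

Lemma quarter_leaves_spanning_tree :
  exists t : rel T, spanning_tree e t /\ #|T| < 4 * #|leaves t|.
Proof.
have [s [gs all]] := grow_to_all good_start.
by exists (parent_rel (parent s)); exact: good_complete_tree.
Qed.

End Growth.

Local Open Scope ring_scope.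

Theorem mainTheorem13 :
  exists c : rat, 0 < c /\
    forall (T : finType) (e : rel T),
      simple_graph e ->
      connected_graph e ->
      (2 <= #|T|)%N ->
      (forall x : T, degree e x = 1%N \/ (3 <= degree e x)%N) ->
      exists t : rel T, spanning_tree e t /\
        c * (#|T|)%:R <= (#|leaves t|)%:R.
Proof.
exists (1 / 4); split; first by rewrite divr_gt0.
move=> T e [e_sym e_irr] e_conn card_T deg.
have [r _] := card_gt0P (ltnW card_T).
have [t [span_t many]] := quarter_leaves_spanning_tree r e_sym e_irr e_conn deg.
exists t; split; first exact: span_t.
have : (#|T|%:R : rat) <= 4 * #|leaves t|%:R by rewrite -natrM ler_nat ltnW.
lra.
Qed.
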